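(* Let $k\ge2$, $\omega>0$, $\chi>0$, and let $a_1,\dots,a_k$ be periodic functions $a_l(t)=\sum_{m\in\mathbb{Z}}A^{(l)}(m)e^{im\omega t}$ whose Fourier coefficients satisfy $|A^{(l)}(m)|\le\alpha_l\frac{e^{-\chi|m|}}{\langle m\rangle^2}$ for all $m\in\mathbb{Z}$ and $l=1,\dots,k$, where $\alpha_l>0$. Then there is a positive constant $\beta_k$ such that the Fourier coefficients $\mathcal{R}_k(a_1|\cdots|a_k)(m)$, $m\in\mathbb{Z}$, of $\mathcal{R}_k(a_1|\cdots|a_k)_t$ satisfy $$|\mathcal{R}_k(a_1|\cdots|a_k)(m)|\le\beta_k\,\alpha_1\cdots\alpha_k\,\frac{e^{-\chi|m|}}{\langle m\rangle^2}.$$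
   Context: $\langle m\rangle:=|m|$ for $m\neq0$, $\langle0\rangle:=1$. For periodic (quasi-periodic) $h$, $M(h)=\lim_{T\to\infty}\frac1{2T}\int_{-T}^Th(t)dt$. Notation $(f|g)_t:=f(t)\int_0^tg(\tau)d\tau$. Renormalisation operators: $\mathcal{R}_1a_1:=a_1$; $\mathcal{R}_2(a_1|a_2)_t:=a_1(t)\int_0^t(a_2(\tau)-M(a_2))d\tau$; for $n>2$, $\mathcal{R}_n(a_1|\cdots|a_n)_t:=\left(a_1\,\big|\,\mathcal{R}_{n-1}(a_2|\cdots|a_n)-M(\mathcal{R}_{n-1}(a_2|\cdots|a_n))\right)_t$; these are periodic with frequency $\omega$ when the $a_l$ are. *)

From Stdlib Require Import Reals ZArith List.
From Coquelicot Require Import Coquelicot.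
Open Scope R_scope.

Definition cexpi (th : R) : C := (cos th, sin th).

Definition bracket (m : Z) : R :=
  if Z.eqb m 0 then 1 else IZR (Z.abs m).

Definition sym_psum (N : nat) (f : Z -> C) : C :=
  fold_right Cplus (RtoC 0)
    (map (fun j : nat => f (Z.of_nat j - Z.of_nat N)%Z) (seq 0 (2 * N + 1))).

(* h(t) = sum_{m in Z} A(m) e^{i m omega t} (pointwise, symmetric partial sums) *)
Definition has_fourier_series (omega : R) (A : Z -> C) (h : R -> C) : Prop :=
  forall t : R,
    filterlim (fun N : nat => sym_psum N (fun m => Cmult (A m) (cexpi (IZR m * omega * t))))
      eventually (locally (h t)).

Definition Mean (h : R -> C) : C :=
  (real (Lim (fun T => / (2 * T) * RInt (fun s => Re (h s)) (- T) T) p_infty),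
   real (Lim (fun T => / (2 * T) * RInt (fun s => Im (h s)) (- T) T) p_infty)).

Definition bar (f g : R -> C) : R -> C :=
  fun t => Cmult (f t) (@RInt C_R_CompleteNormedModule g 0 t).

(* R_n(a_1|...|a_n): R_1 a = a, R_n(a_1|rest) = (a_1 | R_{n-1} rest - M(R_{n-1} rest)).
   For n = 2 this is exactly a_1(t) int_0^t (a_2 - M(a_2)). *)
Fixpoint Renorm (l : list (R -> C)) : R -> C :=
  match l with
  | nil => fun _ => RtoC 0
  | a :: nil => a
  | a :: ((_ :: _) as l') =>
      let g := Renorm l' in bar a (fun s => Cminus (g s) (Mean g))
  end.

Definition fcoef (omega : R) (h : R -> C) (m : Z) : C :=
  Cmult (RtoC (omega / (2 * PI)))
    (@RInt C_R_CompleteNormedModule (fun t => Cmult (h t) (cexpi (- (IZR m * omega * t)))) 0 (2 * PI / omega)).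

(* Call h (B, beta)-bounded if it is continuous, 2pi/omega-periodic, |h| <= B and its
   Fourier coefficients satisfy |h(m)| <= beta e^{-chi|m|}/<m>^2.  Both operations that
   build R_k preserve this, with constants multiplied by the alpha_l:

   - Multiplying by a_l convolves coefficients.  Since <m>^2 <= 2<n>^2 + 2<m-n>^2 and
     e^{-chi|.|} is submultiplicative, the product of the weights at n and m - n is at most
     the weight at m times 2/<n>^2 + 2/<m-n>^2, whose sum over any window is at most 24.
     The same summability makes the Fourier series of a_l converge uniformly, so a_l is
     continuous, periodic and bounded, and the convolution formula holds in the limit.

   - For continuous periodic g, M(g) is the 0-th coefficient of g, so g - M(g) has zero
     integral over a period; its primitive b is then periodic and bounded, and integration
     by parts gives |b(m)| = |g(m)| / (|m| omega) for m <> 0, while |b(0)| <= sup |b|.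

   Induction on k, starting from a_k = a_k * 1, gives beta_k. *)

From Stdlib Require Import Reals ZArith List.
From Coquelicot Require Import Coquelicot.
From Stdlib Require Import Lia Lra.
Open Scope R_scope.

(** * Complex-valued functions of a real variable *)

Notation CInt := (@RInt C_R_CompleteNormedModule).

Lemma C_Re_Im (z : C) : z = (Re z, Im z).
Proof. now destruct z. Qed.

Definition continuous_everywhere (f : R -> C) : Prop := forall x, continuous f x.

Lemma continuous_Re (f : R -> C) x : continuous f x -> continuous (fun t => Re (f t)) x.
Proof.
  intros Hf. apply (continuous_comp f fst); [exact Hf|].
  destruct (f x). apply (continuous_fst (U:=R_UniformSpace) (V:=R_UniformSpace)).
Qed.

Lemma continuous_Im (f : R -> C) x : continuous f x -> continuous (fun t => Im (f t)) x.
Proof.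
  intros Hf. apply (continuous_comp f snd); [exact Hf|].
  destruct (f x). apply (continuous_snd (U:=R_UniformSpace) (V:=R_UniformSpace)).
Qed.

Lemma continuous_C_Re_Im (f : R -> C) x :
  continuous (fun t => Re (f t)) x -> continuous (fun t => Im (f t)) x -> continuous f x.
Proof.
  intros Hre Him. apply continuous_ext with (f := fun t => ((Re (f t), Im (f t)) : C)).
  { intros t. now rewrite <- C_Re_Im. }
  apply (continuous_comp_2 (fun t => Re (f t)) (fun t => Im (f t)) (fun u v => (u, v) : C));
    [exact Hre | exact Him |].
  intros P HP. unfold filtermap. simpl in *. revert HP. apply filter_imp. now intros [u v].
Qed.

Lemma continuous_Cmult (f g : R -> C) x :
  continuous f x -> continuous g x -> continuous (fun t => Cmult (f t) (g t)) x.
Proof.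
  intros Hf Hg. apply continuous_C_Re_Im; simpl.
  - apply (continuous_minus (fun t => Re (f t) * Re (g t)) (fun t => Im (f t) * Im (g t)));
      apply (continuous_mult (K:=R_AbsRing)); auto using continuous_Re, continuous_Im.
  - apply (continuous_plus (fun t => Re (f t) * Im (g t)) (fun t => Im (f t) * Re (g t)));
      apply (continuous_mult (K:=R_AbsRing)); auto using continuous_Re, continuous_Im.
Qed.

Lemma continuous_Cplus (f g : R -> C) x :
  continuous f x -> continuous g x -> continuous (fun t => Cplus (f t) (g t)) x.
Proof.
  intros Hf Hg. apply continuous_C_Re_Im; simpl.
  - apply (continuous_plus (fun t => Re (f t)) (fun t => Re (g t))); auto using continuous_Re.
  - apply (continuous_plus (fun t => Im (f t)) (fun t => Im (g t))); auto using continuous_Im.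
Qed.

Lemma continuous_Cminus (f g : R -> C) x :
  continuous f x -> continuous g x -> continuous (fun t => Cminus (f t) (g t)) x.
Proof.
  intros Hf Hg. apply continuous_C_Re_Im; simpl.
  - apply (continuous_minus (fun t => Re (f t)) (fun t => Re (g t))); auto using continuous_Re.
  - apply (continuous_minus (fun t => Im (f t)) (fun t => Im (g t))); auto using continuous_Im.
Qed.

Lemma continuous_Cconst (c : C) x : continuous (fun _ : R => c) x.
Proof. apply continuous_C_Re_Im; apply continuous_const. Qed.

Lemma continuous_cexpi_affine (c d x : R) : continuous (fun t => cexpi (c * t + d)) x.
Proof.
  apply continuous_C_Re_Im; simpl;
    apply (ex_derive_continuous (K:=R_AbsRing) (V:=R_NormedModule)); auto_derive; auto.
Qed.

Lemma is_derive_val {V : NormedModule R_AbsRing} (f : R -> V) x l l' :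
  is_derive f x l -> l = l' -> is_derive f x l'.
Proof. now intros H <-. Qed.

Lemma is_derive_C_Re_Im (f : R -> C) x a b :
  is_derive (fun t => Re (f t)) x a -> is_derive (fun t => Im (f t)) x b ->
  is_derive f x ((a, b) : C).
Proof.
  unfold is_derive. intros Hre Him.
  apply filterdiff_ext with (f := fun t => ((Re (f t), Im (f t)) : C)).
  { intros t. now rewrite <- C_Re_Im. }
  apply filterdiff_ext_lin with (l1 := fun y => ((scal y a, scal y b) : C)); [|reflexivity].
  apply (filterdiff_comp'_2 (fun t => Re (f t)) (fun t => Im (f t)) (fun u v => ((u, v) : C)) x _ _
           (fun u v => ((u, v) : C))); auto.
  apply (filterdiff_linear (K:=R_AbsRing) (U:=prod_NormedModule R_AbsRing R_NormedModule R_NormedModule)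
           (V:=C_R_NormedModule) (fun t => ((fst t, snd t) : C))).
  apply (is_linear_prod (K:=R_AbsRing) (T:=prod_NormedModule R_AbsRing R_NormedModule R_NormedModule)
           (U:=R_NormedModule) (V:=R_NormedModule)).
  - apply is_linear_fst.
  - apply is_linear_snd.
Qed.

Lemma is_derive_Re (f : R -> C) x l : is_derive f x l -> is_derive (fun t => Re (f t)) x (Re l).
Proof.
  unfold is_derive. intros H.
  apply filterdiff_ext_lin with (l1 := fun y => fst (scal y l)); [|reflexivity].
  apply (filterdiff_comp' f (fun z : C_R_NormedModule => fst z) x _ (fun z : C_R_NormedModule => fst z));
    [exact H|].
  apply (filterdiff_linear (K:=R_AbsRing) (U:=prod_NormedModule R_AbsRing R_NormedModule R_NormedModule)
           (V:=R_NormedModule)).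
  apply is_linear_fst.
Qed.

Lemma is_derive_Im (f : R -> C) x l : is_derive f x l -> is_derive (fun t => Im (f t)) x (Im l).
Proof.
  unfold is_derive. intros H.
  apply filterdiff_ext_lin with (l1 := fun y => snd (scal y l)); [|reflexivity].
  apply (filterdiff_comp' f (fun z : C_R_NormedModule => snd z) x _ (fun z : C_R_NormedModule => snd z));
    [exact H|].
  apply (filterdiff_linear (K:=R_AbsRing) (U:=prod_NormedModule R_AbsRing R_NormedModule R_NormedModule)
           (V:=R_NormedModule)).
  apply is_linear_snd.
Qed.

Lemma is_derive_Cmult (u v : R -> C) x u' v' :
  is_derive u x u' -> is_derive v x v' ->
  is_derive (fun t => Cmult (u t) (v t)) x (Cplus (Cmult u' (v x)) (Cmult (u x) v')).
Proof.
  intros Hu Hv.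
  pose proof (is_derive_Re _ _ _ Hu). pose proof (is_derive_Im _ _ _ Hu).
  pose proof (is_derive_Re _ _ _ Hv). pose proof (is_derive_Im _ _ _ Hv).
  rewrite (C_Re_Im (Cplus _ _)). apply is_derive_C_Re_Im; simpl.
  - eapply is_derive_val.
    + apply (is_derive_minus (fun t => Re (u t) * Re (v t)) (fun t => Im (u t) * Im (v t)));
        apply Derive.is_derive_mult; eauto.
    + simpl. unfold minus, plus, opp, Re, Im; simpl. ring.
  - eapply is_derive_val.
    + apply (is_derive_plus (fun t => Re (u t) * Im (v t)) (fun t => Im (u t) * Re (v t)));
        apply Derive.is_derive_mult; eauto.
    + simpl. unfold plus, Re, Im; simpl. ring.
Qed.

Lemma is_derive_cexpi_affine (c d x : R) :
  is_derive (fun t => cexpi (c * t + d)) x (Cmult (0, c) (cexpi (c * x + d))).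
Proof. rewrite (C_Re_Im (Cmult _ _)). apply is_derive_C_Re_Im; simpl; auto_derive; auto; ring. Qed.

Lemma ex_RInt_continuous_everywhere (f : R -> C) a b :
  continuous_everywhere f -> ex_RInt (V:=C_R_CompleteNormedModule) f a b.
Proof. intros H. apply ex_RInt_continuous. intros; apply H. Qed.

Lemma Re_CInt (f : R -> C) a b :
  ex_RInt (V:=C_R_CompleteNormedModule) f a b -> Re (CInt f a b) = RInt (fun t => Re (f t)) a b.
Proof.
  intros H. apply RInt_correct, (is_RInt_fct_extend_fst (U:=R_NormedModule) (V:=R_NormedModule)) in H.
  symmetry. now apply is_RInt_unique.
Qed.

Lemma Im_CInt (f : R -> C) a b :
  ex_RInt (V:=C_R_CompleteNormedModule) f a b -> Im (CInt f a b) = RInt (fun t => Im (f t)) a b.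
Proof.
  intros H. apply RInt_correct, (is_RInt_fct_extend_snd (U:=R_NormedModule) (V:=R_NormedModule)) in H.
  symmetry. now apply is_RInt_unique.
Qed.

Lemma is_RInt_val {V : NormedModule R_AbsRing} (f : R -> V) a b l l' :
  is_RInt f a b l -> l = l' -> is_RInt f a b l'.
Proof. now intros H <-. Qed.

Lemma is_RInt_Cmult_l (f : R -> C) a b (l c : C) :
  is_RInt (V:=C_R_NormedModule) f a b l ->
  is_RInt (V:=C_R_NormedModule) (fun t => Cmult c (f t)) a b (Cmult c l).
Proof.
  intros H.
  pose proof (is_RInt_fct_extend_fst (U:=R_NormedModule) (V:=R_NormedModule) _ _ _ _ H).
  pose proof (is_RInt_fct_extend_snd (U:=R_NormedModule) (V:=R_NormedModule) _ _ _ _ H).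
  rewrite (C_Re_Im (Cmult c l)).
  apply (is_RInt_fct_extend_pair (U:=R_NormedModule) (V:=R_NormedModule)); simpl.
  - eapply is_RInt_val.
    + apply (is_RInt_minus (V:=R_NormedModule) (fun t => fst c * fst (f t)) (fun t => snd c * snd (f t)));
        apply (is_RInt_scal (V:=R_NormedModule)); eauto.
    + unfold minus, plus, opp, scal; simpl. unfold mult; simpl. unfold Re, Im; ring.
  - eapply is_RInt_val.
    + apply (is_RInt_plus (V:=R_NormedModule) (fun t => fst c * snd (f t)) (fun t => snd c * fst (f t)));
        apply (is_RInt_scal (V:=R_NormedModule)); eauto.
    + unfold plus, scal; simpl. unfold mult; simpl. unfold Re, Im; ring.
Qed.

Lemma CInt_Cmult_l (f : R -> C) a b (c : C) :
  ex_RInt (V:=C_R_CompleteNormedModule) f a b ->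
  CInt (fun t => Cmult c (f t)) a b = Cmult c (CInt f a b).
Proof. intros H. apply is_RInt_unique, is_RInt_Cmult_l, (RInt_correct (V:=C_R_CompleteNormedModule)), H. Qed.

Lemma CInt_const (c : C) a b : CInt (fun _ => c) a b = Cmult (RtoC (b - a)) c.
Proof.
  rewrite (RInt_const (V:=C_R_CompleteNormedModule)). destruct c as [c1 c2].
  unfold scal; simpl. unfold prod_scal; simpl. unfold scal; simpl. unfold mult; simpl.
  unfold Cmult, RtoC; simpl. f_equal; ring.
Qed.

Lemma Cmod_CInt_le (f : R -> C) a b M :
  a <= b -> ex_RInt (V:=C_R_CompleteNormedModule) f a b ->
  (forall t, a <= t <= b -> Cmod (f t) <= M) -> Cmod (CInt f a b) <= (b - a) * M.
Proof.
  intros Hab Hex HM. rewrite Cmod_norm.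
  apply (norm_RInt_le_const (V:=C_R_NormedModule) f a b); auto.
  - intros t Ht. rewrite <- Cmod_norm. auto.
  - apply (RInt_correct (V:=C_R_CompleteNormedModule)), Hex.
Qed.

(** * Periodic functions and their means *)

Definition periodic {X : Type} (T : R) (f : R -> X) : Prop := forall x, f (x + T) = f x.

Lemma periodic_INR {X} (f : R -> X) T : periodic T f -> forall n x, f (x + INR n * T) = f x.
Proof.
  intros H n. induction n as [|n IH]; intros x.
  - simpl. now rewrite Rmult_0_l, Rplus_0_r.
  - rewrite S_INR. replace (x + (INR n + 1) * T) with ((x + INR n * T) + T) by ring.
    now rewrite H.
Qed.

Lemma periodic_IZR {X} (f : R -> X) T : periodic T f -> forall z x, f (x + IZR z * T) = f x.
Proof.
  intros H z x. destruct z as [|q|q].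
  - simpl. now rewrite Rmult_0_l, Rplus_0_r.
  - rewrite <- positive_nat_Z, <- INR_IZR_INZ. now apply periodic_INR.
  - rewrite <- Pos2Z.opp_pos, opp_IZR, <- positive_nat_Z, <- INR_IZR_INZ.
    rewrite <- (periodic_INR f T H (Pos.to_nat q) (x + - INR (Pos.to_nat q) * T)).
    f_equal. ring.
Qed.

Lemma cexpi_plus_IZR_2PI z y : cexpi (y + IZR z * (2 * PI)) = cexpi y.
Proof.
  unfold cexpi. f_equal.
  - apply (periodic_IZR cos). intros x. rewrite cos_plus, cos_2PI, sin_2PI. ring.
  - apply (periodic_IZR sin). intros x. rewrite sin_plus, cos_2PI, sin_2PI. ring.
Qed.

Lemma periodic_reduce {X} (f : R -> X) T :
  0 < T -> periodic T f -> forall x, exists y, 0 <= y <= T /\ f x = f y.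
Proof.
  intros HT H x. destruct (archimed (x / T)) as [Hup1 Hup2].
  set (z := (up (x / T) - 1)%Z).
  assert (Hz : IZR z = IZR (up (x / T)) - 1) by (unfold z; now rewrite minus_IZR).
  exists (x - IZR z * T). split.
  - assert (IZR z * T <= x / T * T < (IZR z + 1) * T)
      by (split; [apply Rmult_le_compat_r | apply Rmult_lt_compat_r]; lra).
    replace (x / T * T) with x in * by (field; lra). nra.
  - rewrite <- (periodic_IZR f T H z (x - IZR z * T)). f_equal. ring.
Qed.

Section PeriodicPrimitive.
Context {V : CompleteNormedModule R_AbsRing} (f : R -> V) (T : R).
Hypotheses (HT : 0 < T) (Hex : forall a b, ex_RInt f a b) (Hper : periodic T f).

Lemma RInt_periodic_shift x : RInt f x (x + T) = RInt f 0 T.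
Proof.
  rewrite <- (RInt_Chasles f x T (x + T)), <- (RInt_Chasles f 0 x T) by auto.
  replace (RInt f T (x + T)) with (RInt f 0 x); [apply plus_comm|].
  replace T with (1 * 0 + T) at 1 by ring. replace (x + T) with (1 * x + T) by ring.
  rewrite <- RInt_comp_lin by apply Hex.
  apply RInt_ext. intros y _.
  replace (1 * y + T) with (y + T) by ring. rewrite Hper. symmetry. exact (scal_one (f y)).
Qed.

Hypothesis Hmean0 : RInt f 0 T = zero.

Lemma RInt_primitive_periodic : periodic T (fun x => RInt f 0 x).
Proof.
  intros x. rewrite <- (RInt_Chasles f 0 x (x + T)) by auto.
  rewrite RInt_periodic_shift, Hmean0. apply plus_zero_r.
Qed.

Lemma norm_RInt_primitive_le B : (forall t, norm (f t) <= B) -> forall x, norm (RInt f 0 x) <= T * B.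
Proof.
  intros HB x.
  destruct (periodic_reduce _ T HT RInt_primitive_periodic x) as [y [Hy ->]].
  apply Rle_trans with ((y - 0) * B).
  - apply (norm_RInt_le_const f 0 y); [lra | intros; apply HB | apply RInt_correct, Hex].
  - apply Rmult_le_compat_r; [|lra]. apply Rle_trans with (norm (f 0)); [apply norm_ge_0 | apply HB].
Qed.

End PeriodicPrimitive.

Lemma is_lim_bounded_div_pinfty (h : R -> R) M :
  (forall x, Rabs (h x) <= M) -> is_lim (fun x => h x / x) p_infty 0.
Proof.
  intros HM. apply is_lim_spec. intros eps. exists (M / eps). intros x Hx.
  pose proof (cond_pos eps) as Heps.
  assert (HM0 : 0 <= M) by (apply Rle_trans with (Rabs (h 0)); [apply Rabs_pos | apply HM]).
  assert (Hx0 : 0 < x) by (apply Rle_lt_trans with (M / eps); [apply Rdiv_le_0_compat|]; lra).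
  rewrite Rminus_0_r, Rabs_div, (Rabs_right x) by lra.
  apply Rle_lt_trans with (M / x).
  - apply Rmult_le_compat_r; [left; apply Rinv_0_lt_compat |]; auto.
  - apply Rlt_div_l; [lra|]. apply Rlt_div_l in Hx; [lra | exact Heps].
Qed.

(* The centred primitive [G] of [f] is periodic and bounded, and
   [int_{-x}^x f = G x - G (-x) + 2 x c] where [c] is the mean over one period. *)
Lemma is_lim_mean_periodic (f : R -> R) T B :
  0 < T -> (forall x, continuous f x) -> periodic T f -> (forall x, Rabs (f x) <= B) ->
  is_lim (fun x => / (2 * x) * RInt f (- x) x) p_infty (/ T * RInt f 0 T).
Proof.
  intros HT Hc Hp HB.
  set (c := / T * RInt f 0 T).
  assert (Hexf : forall a b, ex_RInt f a b)
    by (intros; apply (ex_RInt_continuous (V:=R_CompleteNormedModule)); intros; apply Hc).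
  set (g := fun s => f s - c).
  assert (Hexg : forall a b, ex_RInt g a b)
    by (intros; apply (ex_RInt_minus (V:=R_NormedModule)); [apply Hexf | apply ex_RInt_const]).
  assert (Hg : forall a b, RInt g a b = RInt f a b - (b - a) * c).
  { intros. unfold g. rewrite (RInt_minus (V:=R_CompleteNormedModule)), RInt_const;
      [reflexivity | apply Hexf | apply ex_RInt_const]. }
  assert (Hpg : periodic T g) by (intros x; unfold g; now rewrite Hp).
  assert (Hg0 : RInt g 0 T = zero) by (rewrite Hg; unfold c, zero; simpl; field; lra).
  set (G := fun x => RInt g 0 x).
  assert (HGb : forall x, Rabs (G x - G (- x)) <= 2 * (T * (B + Rabs c))).
  { assert (HG : forall x, Rabs (G x) <= T * (B + Rabs c)).
    { apply (norm_RInt_primitive_le g T HT Hexg Hpg Hg0). intros t.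
      unfold g. change (norm (f t - c)) with (Rabs (f t - c)).
      eapply Rle_trans; [apply Rabs_triang|]. rewrite Rabs_Ropp. specialize (HB t). lra. }
    intros x. eapply Rle_trans; [apply Rabs_triang|]. rewrite Rabs_Ropp.
    pose proof (HG x). pose proof (HG (- x)). lra. }
  apply is_lim_ext_loc with (f := fun x => (G x - G (- x)) / 2 / x + c).
  { exists 0. intros x Hx. unfold G.
    replace (RInt f (- x) x) with (RInt g (- x) x + (x - - x) * c) by (rewrite Hg; ring).
    rewrite <- (RInt_Chasles g (- x) 0 x), <- (opp_RInt_swap g 0 (- x)) by auto.
    unfold plus, opp; simpl. field. lra. }
  replace (Finite c) with (Rbar_plus 0 c) by (simpl; f_equal; ring).
  apply (is_lim_plus _ _ p_infty 0 c); [| apply is_lim_const | reflexivity].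
  apply is_lim_bounded_div_pinfty with (M := T * (B + Rabs c)).
  intros x. unfold Rdiv. rewrite Rabs_mult, Rabs_inv, (Rabs_right 2) by lra.
  specialize (HGb x). lra.
Qed.

(** * Fourier coefficients *)

Definition fkernel (omega : R) (m : Z) (t : R) : C := cexpi (- (IZR m * omega * t)).

Lemma fcoefE omega h m :
  fcoef omega h m
  = Cmult (RtoC (omega / (2 * PI))) (CInt (fun t => Cmult (h t) (fkernel omega m t)) 0 (2 * PI / omega)).
Proof. reflexivity. Qed.

Lemma Cmod_cexpi x : Cmod (cexpi x) = 1.
Proof.
  unfold Cmod, cexpi; simpl. pose proof (sin2_cos2 x) as H. unfold Rsqr in H.
  replace (cos x * (cos x * 1) + sin x * (sin x * 1)) with 1 by nra. apply sqrt_1.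
Qed.

Lemma Cmult_cexpi x y : Cmult (cexpi x) (cexpi y) = cexpi (x + y).
Proof. unfold cexpi, Cmult; simpl. rewrite cos_plus, sin_plus. f_equal; ring. Qed.

Lemma continuous_cexpi_mul omega n x : continuous (fun t => cexpi (IZR n * omega * t)) x.
Proof.
  apply continuous_ext with (f := fun t => cexpi ((IZR n * omega) * t + 0)).
  { intros t. f_equal. ring. }
  apply continuous_cexpi_affine.
Qed.

Lemma continuous_fkernel omega m x : continuous (fkernel omega m) x.
Proof.
  apply continuous_ext with (f := fun t => cexpi ((- (IZR m * omega)) * t + 0)).
  { intros t. unfold fkernel. f_equal. ring. }
  apply continuous_cexpi_affine.
Qed.

Lemma is_derive_fkernel omega m x :
  is_derive (fkernel omega m) x (Cmult (0, - (IZR m * omega)) (fkernel omega m x)).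
Proof.
  pose proof (is_derive_cexpi_affine (- (IZR m * omega)) 0 x) as H.
  replace (- (IZR m * omega) * x + 0) with (- (IZR m * omega * x)) in H by ring.
  eapply filterdiff_ext; [|exact H]. intros t. unfold fkernel. f_equal. ring.
Qed.

Lemma fkernel_period omega m : 0 < omega -> fkernel omega m (2 * PI / omega) = fkernel omega m 0.
Proof.
  intros Ho. unfold fkernel.
  replace (- (IZR m * omega * (2 * PI / omega))) with (0 + IZR (- m) * (2 * PI))
    by (rewrite opp_IZR; field; lra).
  rewrite cexpi_plus_IZR_2PI. f_equal. ring.
Qed.

Lemma continuous_mul_fkernel omega h m :
  continuous_everywhere h -> continuous_everywhere (fun t => Cmult (h t) (fkernel omega m t)).
Proof. intros H x. apply continuous_Cmult; [apply H | apply continuous_fkernel]. Qed.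

Lemma Cmod_fcoef_le omega h m B :
  0 < omega -> continuous_everywhere h -> (forall t, 0 <= t <= 2 * PI / omega -> Cmod (h t) <= B) ->
  Cmod (fcoef omega h m) <= B.
Proof.
  intros Ho Hc HB. pose proof PI_RGT_0.
  assert (HT : 0 <= 2 * PI / omega) by (apply Rdiv_le_0_compat; lra).
  assert (Hw : 0 <= omega / (2 * PI)) by (apply Rdiv_le_0_compat; lra).
  rewrite fcoefE, Cmod_mult, Cmod_R, Rabs_right by lra.
  apply Rle_trans with (omega / (2 * PI) * ((2 * PI / omega - 0) * B)).
  - apply Rmult_le_compat_l; [exact Hw|].
    apply Cmod_CInt_le; [exact HT | apply ex_RInt_continuous_everywhere, continuous_mul_fkernel, Hc |].
    intros t Ht. unfold fkernel. rewrite Cmod_mult, Cmod_cexpi, Rmult_1_r. auto.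
  - right. field. lra.
Qed.

Lemma fcoef_ext omega h1 h2 m : (forall t, h1 t = h2 t) -> fcoef omega h1 m = fcoef omega h2 m.
Proof. intros H. rewrite !fcoefE. f_equal. apply RInt_ext. intros t _. now rewrite H. Qed.

Lemma fcoef_Cmult_l omega h c m :
  continuous_everywhere h -> fcoef omega (fun t => Cmult c (h t)) m = Cmult c (fcoef omega h m).
Proof.
  intros H. rewrite !fcoefE.
  rewrite (RInt_ext (V:=C_R_CompleteNormedModule) _ (fun t => Cmult c (Cmult (h t) (fkernel omega m t)))) by (intros; simpl; ring).
  rewrite CInt_Cmult_l by apply ex_RInt_continuous_everywhere, continuous_mul_fkernel, H.
  ring.
Qed.

Lemma fcoef_Cplus omega h1 h2 m :
  continuous_everywhere h1 -> continuous_everywhere h2 ->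
  fcoef omega (fun t => Cplus (h1 t) (h2 t)) m = Cplus (fcoef omega h1 m) (fcoef omega h2 m).
Proof.
  intros H1 H2. rewrite !fcoefE.
  rewrite (RInt_ext (V:=C_R_CompleteNormedModule) _ (fun t => Cplus (Cmult (h1 t) (fkernel omega m t)) (Cmult (h2 t) (fkernel omega m t))))
    by (intros; simpl; ring).
  rewrite (RInt_plus (V:=C_R_CompleteNormedModule))
    by (apply ex_RInt_continuous_everywhere, continuous_mul_fkernel; assumption).
  change plus with Cplus. ring.
Qed.

Lemma fcoef_Cminus omega h1 h2 m :
  continuous_everywhere h1 -> continuous_everywhere h2 ->
  fcoef omega (fun t => Cminus (h1 t) (h2 t)) m = Cminus (fcoef omega h1 m) (fcoef omega h2 m).
Proof.
  intros H1 H2. rewrite !fcoefE.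
  rewrite (RInt_ext (V:=C_R_CompleteNormedModule) _ (fun t => Cminus (Cmult (h1 t) (fkernel omega m t)) (Cmult (h2 t) (fkernel omega m t))))
    by (intros; simpl; ring).
  rewrite (RInt_minus (V:=C_R_CompleteNormedModule))
    by (apply ex_RInt_continuous_everywhere, continuous_mul_fkernel; assumption).
  change minus with Cminus. ring.
Qed.

Lemma fcoef_cexpi_mul omega h n m :
  fcoef omega (fun t => Cmult (cexpi (IZR n * omega * t)) (h t)) m = fcoef omega h (m - n).
Proof.
  rewrite !fcoefE. f_equal. apply RInt_ext. intros t _. unfold fkernel.
  rewrite <- Cmult_assoc, (Cmult_comm (cexpi _)), <- Cmult_assoc, Cmult_cexpi.
  do 2 f_equal. rewrite minus_IZR. ring.
Qed.

Lemma fcoef_0 omega h :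
  fcoef omega h 0 = Cmult (RtoC (omega / (2 * PI))) (CInt h 0 (2 * PI / omega)).
Proof.
  rewrite fcoefE. f_equal. apply RInt_ext. intros t _. unfold fkernel, cexpi.
  replace (- (IZR 0 * omega * t)) with 0 by (simpl; ring). rewrite cos_0, sin_0.
  change (Cmult (h t) 1 = h t). ring.
Qed.

Lemma fcoef_const_0 omega c : 0 < omega -> fcoef omega (fun _ => c) 0 = c.
Proof.
  intros Ho. pose proof PI_RGT_0.
  rewrite fcoef_0, CInt_const, Cmult_assoc, <- RtoC_mult.
  replace (omega / (2 * PI) * (2 * PI / omega - 0)) with 1 by (field; lra).
  apply Cmult_1_l.
Qed.

(* [fkernel omega m] is the derivative of [fkernel omega m / (- i m omega)], which takes
   the same value at both ends of a period. *)
Lemma CInt_fkernel_neq0 omega m :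
  0 < omega -> m <> 0%Z -> CInt (fkernel omega m) 0 (2 * PI / omega) = RtoC 0.
Proof.
  intros Ho Hm. set (u := - (IZR m * omega)).
  assert (Hu : u <> 0).
  { unfold u. intros H. apply Hm, eq_IZR. apply Rmult_eq_reg_r with omega; nra. }
  assert (H : is_RInt (V:=C_R_NormedModule) (fun t => Cmult (0, u) (fkernel omega m t)) 0 (2 * PI / omega)
                (minus (fkernel omega m (2 * PI / omega)) (fkernel omega m 0))).
  { apply (is_RInt_derive (V:=C_R_CompleteNormedModule)); intros; [apply is_derive_fkernel|].
    apply continuous_Cmult; [apply continuous_Cconst | apply continuous_fkernel]. }
  rewrite fkernel_period, minus_eq_zero in H by exact Ho.
  apply (is_RInt_unique (V:=C_R_CompleteNormedModule)) in H.
  change (CInt (fun t => Cmult (0, u) (fkernel omega m t)) 0 (2 * PI / omega) = RtoC 0) in H.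
  rewrite CInt_Cmult_l in H by (apply ex_RInt_continuous_everywhere; intro; apply continuous_fkernel).
  apply (f_equal Cmod) in H.
  rewrite Cmod_mult, Cmod_0 in H. apply Cmod_eq_0.
  destruct (Rmult_integral _ _ H) as [H0|H0]; [|exact H0].
  apply Cmod_eq_0 in H0. injection H0. contradiction.
Qed.

Lemma fcoef_const_neq0 omega c m : 0 < omega -> m <> 0%Z -> fcoef omega (fun _ => c) m = RtoC 0.
Proof.
  intros Ho Hm. rewrite fcoefE, CInt_Cmult_l, CInt_fkernel_neq0 by
    (auto; apply ex_RInt_continuous_everywhere; intro; apply continuous_fkernel).
  ring.
Qed.

Lemma Mean_fcoef_0 omega g B :
  0 < omega -> continuous_everywhere g -> periodic (2 * PI / omega) g -> (forall t, Cmod (g t) <= B) ->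
  Mean g = fcoef omega g 0.
Proof.
  intros Ho Hc Hp HB. pose proof PI_RGT_0.
  assert (HT : 0 < 2 * PI / omega) by (apply Rdiv_lt_0_compat; lra).
  assert (Hre := is_lim_mean_periodic (fun s => Re (g s)) _ B HT (fun x => continuous_Re g x (Hc x))
                   (fun x => f_equal Re (Hp x)) (fun x => Rle_trans _ _ _ (re_le_Cmod (g x)) (HB x))).
  assert (Him := is_lim_mean_periodic (fun s => Im (g s)) _ B HT (fun x => continuous_Im g x (Hc x))
                   (fun x => f_equal Im (Hp x))
                   (fun x => Rle_trans _ _ _ (Rle_trans _ _ _ (Rmax_r _ _) (Rmax_Cmod (g x))) (HB x))).
  unfold Mean. rewrite (is_lim_unique _ _ _ Hre), (is_lim_unique _ _ _ Him). simpl real.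
  rewrite fcoef_0, (C_Re_Im (CInt g 0 (2 * PI / omega))).
  rewrite Re_CInt, Im_CInt by apply ex_RInt_continuous_everywhere, Hc.
  unfold Cmult, RtoC; simpl. f_equal; field; lra.
Qed.

Lemma is_derive_primitive (g : R -> C) x :
  continuous_everywhere g -> is_derive (fun t => CInt g 0 t) x (g x).
Proof.
  intros Hg. apply (is_derive_RInt (V:=C_R_NormedModule) g (fun t => CInt g 0 t) 0 x); [|apply Hg].
  apply filter_forall. intros y.
  apply (RInt_correct (V:=C_R_CompleteNormedModule)), ex_RInt_continuous_everywhere, Hg.
Qed.

Lemma continuous_primitive (g : R -> C) : continuous_everywhere g -> continuous_everywhere (fun t => CInt g 0 t).
Proof.
  intros Hg x. apply (ex_derive_continuous (K:=R_AbsRing) (V:=C_R_NormedModule)).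
  eexists. now apply is_derive_primitive.
Qed.

(* Integration by parts against [fkernel omega n]; the boundary terms vanish because the
   primitive vanishes at both ends of the period. *)
Lemma Cmod_fcoef_primitive omega (g : R -> C) n :
  0 < omega -> continuous_everywhere g -> CInt g 0 (2 * PI / omega) = RtoC 0 -> n <> 0%Z ->
  Cmod (fcoef omega (fun t => CInt g 0 t) n) * (Rabs (IZR n) * omega) = Cmod (fcoef omega g n).
Proof.
  intros Ho Hg HT Hn.
  set (b := fun t => CInt g 0 t). set (u := - (IZR n * omega)). set (T := 2 * PI / omega).
  assert (Hb : continuous_everywhere b) by now apply continuous_primitive.
  assert (H : is_RInt (V:=C_R_NormedModule)
                (fun t => Cplus (Cmult (g t) (fkernel omega n t)) (Cmult (b t) (Cmult (0, u) (fkernel omega n t))))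
                0 T (minus (Cmult (b T) (fkernel omega n T)) (Cmult (b 0) (fkernel omega n 0)))).
  { apply (is_RInt_derive (V:=C_R_CompleteNormedModule) (fun t => Cmult (b t) (fkernel omega n t))).
    - intros x _. apply is_derive_Cmult; [now apply is_derive_primitive | apply is_derive_fkernel].
    - intros x _. apply continuous_Cplus; apply continuous_Cmult;
        auto using continuous_fkernel, continuous_Cmult, continuous_Cconst. }
  assert (Hb0 : b 0 = RtoC 0) by apply (RInt_point (V:=C_R_CompleteNormedModule)).
  assert (HbT : b T = RtoC 0) by exact HT.
  rewrite Hb0, HbT in H. apply (is_RInt_unique (V:=C_R_CompleteNormedModule)) in H.
  rewrite (RInt_plus (V:=C_R_CompleteNormedModule)) in H
    by (apply ex_RInt_continuous_everywhere; intro; apply continuous_Cmult;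
        auto using continuous_fkernel, continuous_Cmult, continuous_Cconst).
  rewrite (RInt_ext (V:=C_R_CompleteNormedModule) (fun t => Cmult (b t) (Cmult (0, u) (fkernel omega n t)))
                    (fun t => Cmult (0, u) (Cmult (b t) (fkernel omega n t)))) in H by (intros; simpl; ring).
  rewrite CInt_Cmult_l in H by apply ex_RInt_continuous_everywhere, continuous_mul_fkernel, Hb.
  set (X := CInt (fun t => Cmult (b t) (fkernel omega n t)) 0 T) in H.
  set (Y := CInt (fun t => Cmult (g t) (fkernel omega n t)) 0 T) in H.
  assert (HXY : Cmult (0, u) X = Copp Y).
  { change plus with Cplus in H. change minus with Cminus in H.
    replace (Cmult (0, u) X) with (Cminus (Cplus Y (Cmult (0, u) X)) Y) by ring. rewrite H. ring. }
  apply (f_equal Cmod) in HXY. rewrite Cmod_mult, Cmod_opp in HXY.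
  assert (Hu : Cmod ((0, u) : C) = Rabs u)
    by (unfold Cmod; simpl; rewrite <- sqrt_Rsqr_abs; f_equal; unfold Rsqr; ring).
  rewrite !fcoefE, !Cmod_mult. fold T b. fold X Y. rewrite <- HXY, Hu.
  unfold u. rewrite Rabs_Ropp, Rabs_mult, (Rabs_right omega) by lra. ring.
Qed.

(** * Symmetric sums and the weight e^{-chi|m|}/<m>^2 *)

Lemma sym_psum_0 f : sym_psum 0 f = Cplus (f 0%Z) (RtoC 0).
Proof. reflexivity. Qed.

Lemma fold_right_Cplus_init (L : list C) z : fold_right Cplus z L = Cplus (fold_right Cplus (RtoC 0) L) z.
Proof. induction L as [|x L IH]; simpl; [ring | rewrite IH; ring]. Qed.

Lemma sym_psum_S N f :
  sym_psum (S N) f = Cplus (Cplus (sym_psum N f) (f (- Z.of_nat (S N))%Z)) (f (Z.of_nat (S N))).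
Proof.
  unfold sym_psum. set (L := (2 * N + 1)%nat).
  replace (2 * S N + 1)%nat with (S (S L)) by (unfold L; lia).
  rewrite seq_S. change (seq 0 (S L)) with (0%nat :: seq 1 L).
  rewrite map_app, fold_right_app. change (map ?g (0%nat :: ?l)) with (g 0%nat :: map g l).
  change (fold_right Cplus (RtoC 0) (map ?g (?x :: nil))) with (Cplus (g x) (RtoC 0)).
  change (fold_right Cplus ?z (?y :: ?l)) with (Cplus y (fold_right Cplus z l)).
  rewrite <- seq_shift, map_map, fold_right_Cplus_init.
  replace (map (fun x : nat => f (Z.of_nat (S x) - Z.of_nat (S N))%Z) (seq 0 L))
    with (map (fun j : nat => f (Z.of_nat j - Z.of_nat N)%Z) (seq 0 L))
    by (apply map_ext; intros j; f_equal; lia).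
  replace (Z.of_nat 0 - Z.of_nat (S N))%Z with (- Z.of_nat (S N))%Z by lia.
  replace (Z.of_nat (0 + S L) - Z.of_nat (S N))%Z with (Z.of_nat (S N)) by (unfold L; lia).
  ring.
Qed.

Fixpoint sym_rsum (N : nat) (f : Z -> R) : R :=
  match N with
  | O => f 0%Z
  | S n => sym_rsum n f + f (- Z.of_nat (S n))%Z + f (Z.of_nat (S n))
  end.

Lemma Cmod_sym_psum_le N f : Cmod (sym_psum N f) <= sym_rsum N (fun n => Cmod (f n)).
Proof.
  induction N as [|N IH].
  - rewrite sym_psum_0, Cplus_0_r. apply Rle_refl.
  - rewrite sym_psum_S. cbn [sym_rsum].
    eapply Rle_trans; [apply Cmod_triangle|]. apply Rplus_le_compat_r.
    eapply Rle_trans; [apply Cmod_triangle|]. lra.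
Qed.

Lemma sym_rsum_le N f g : (forall n, f n <= g n) -> sym_rsum N f <= sym_rsum N g.
Proof.
  intros H. induction N as [|N IH]; cbn [sym_rsum]; [apply H|].
  pose proof (H (- Z.of_nat (S N))%Z). pose proof (H (Z.of_nat (S N))). lra.
Qed.

Lemma sym_rsum_scal N c f : sym_rsum N (fun n => c * f n) = c * sym_rsum N f.
Proof. induction N as [|N IH]; cbn [sym_rsum]; [reflexivity | rewrite IH; ring]. Qed.

Lemma sym_rsum_plus N f g : sym_rsum N (fun n => f n + g n) = sym_rsum N f + sym_rsum N g.
Proof. induction N as [|N IH]; cbn [sym_rsum]; [reflexivity | rewrite IH; ring]. Qed.

Lemma bracket_ge_1 m : 1 <= bracket m.
Proof. unfold bracket. destruct (Z.eqb_spec m 0); [lra | apply IZR_le; lia]. Qed.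

Lemma bracket_neq0 m : m <> 0%Z -> bracket m = IZR (Z.abs m).
Proof. intros H. unfold bracket. destruct (Z.eqb_spec m 0); [contradiction | reflexivity]. Qed.

Lemma bracket_opp m : bracket (- m) = bracket m.
Proof.
  unfold bracket. rewrite Z.abs_opp.
  destruct (Z.eqb_spec m 0), (Z.eqb_spec (- m) 0); auto; lia.
Qed.

Lemma IZR_abs_le_bracket m : IZR (Z.abs m) <= bracket m.
Proof. unfold bracket. destruct (Z.eqb_spec m 0) as [->|]; simpl; lra. Qed.

Lemma bracket_triangle m n : bracket m <= bracket n + bracket (m - n).
Proof.
  pose proof (bracket_ge_1 n). pose proof (bracket_ge_1 (m - n)).
  destruct (Z.eq_dec m 0) as [->|Hm]; [change (bracket 0) with 1; lra|].
  rewrite (bracket_neq0 m Hm). pose proof (IZR_abs_le_bracket n). pose proof (IZR_abs_le_bracket (m - n)).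
  assert (IZR (Z.abs m) <= IZR (Z.abs n) + IZR (Z.abs (m - n))) by (rewrite <- plus_IZR; apply IZR_le; lia).
  lra.
Qed.

Lemma inv_sq_le_telescope (k : R) : 1 <= k -> / (k ^ 2) <= 2 / (2 * k - 1) - 2 / (2 * (k + 1) - 1).
Proof.
  intros Hk.
  replace (2 / (2 * k - 1) - 2 / (2 * (k + 1) - 1)) with (/ (k ^ 2 - / 4)) by (field; repeat split; nra).
  apply Rinv_le_contravar; nra.
Qed.

(* A potential bounded by 3 whose increments dominate [1 / <j>^2], built from
   [inv_sq_le_telescope]; sums of [1 / <m - n>^2] over windows are thus at most 6. *)
Definition inv_sq_potential (j : Z) : R :=
  if Z.leb 1 j then 3 - 2 / (2 * IZR j - 1) else - (3 - 2 / (2 * IZR (1 - j) - 1)).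

Lemma inv_sq_potential_step j : / (bracket j ^ 2) <= inv_sq_potential (j + 1) - inv_sq_potential j.
Proof.
  unfold inv_sq_potential.
  destruct (Z.leb_spec 1 j); destruct (Z.leb_spec 1 (j + 1)); try lia.
  - rewrite bracket_neq0, plus_IZR by lia.
    replace (IZR (Z.abs j)) with (IZR j) by (f_equal; lia).
    pose proof (inv_sq_le_telescope (IZR j) ltac:(apply IZR_le; lia)). lra.
  - replace j with 0%Z by lia. unfold bracket. simpl. lra.
  - rewrite bracket_neq0 by lia. set (k := IZR (Z.abs j)).
    replace (IZR (1 - (j + 1))) with k by (unfold k; f_equal; lia).
    replace (IZR (1 - j)) with (k + 1) by (unfold k; rewrite <- plus_IZR; f_equal; lia).
    pose proof (inv_sq_le_telescope k ltac:(unfold k; apply IZR_le; lia)). lra.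
Qed.

Lemma Rabs_inv_sq_potential_le j : Rabs (inv_sq_potential j) <= 3.
Proof.
  assert (Hb : forall x, 1 <= x -> 0 < 2 / (2 * x - 1) <= 2).
  { intros x Hx. split; [apply Rdiv_lt_0_compat; lra|]. apply Rle_div_l; lra. }
  unfold inv_sq_potential. destruct (Z.leb_spec 1 j).
  - pose proof (Hb (IZR j) ltac:(apply IZR_le; lia)). apply Rabs_le. lra.
  - pose proof (Hb (IZR (1 - j)) ltac:(apply IZR_le; lia)). apply Rabs_le. lra.
Qed.

Lemma sym_rsum_inv_bracket_sub_le N m : sym_rsum N (fun n => / (bracket (m - n) ^ 2)) <= 6.
Proof.
  enough (H : sym_rsum N (fun n => / (bracket (m - n) ^ 2))
              <= inv_sq_potential (m + Z.of_nat N + 1) - inv_sq_potential (m - Z.of_nat N)).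
  { eapply Rle_trans; [exact H|].
    pose proof (Rabs_inv_sq_potential_le (m + Z.of_nat N + 1)) as H1.
    pose proof (Rabs_inv_sq_potential_le (m - Z.of_nat N)) as H2.
    apply Rabs_le_between in H1. apply Rabs_le_between in H2. lra. }
  induction N as [|N IH]; cbn [sym_rsum].
  - replace (m - 0)%Z with m by lia. replace (m + Z.of_nat 0 + 1)%Z with (m + 1)%Z by lia.
    replace (m - Z.of_nat 0)%Z with m by lia. apply inv_sq_potential_step.
  - pose proof (inv_sq_potential_step (m + Z.of_nat N + 1)%Z) as H1.
    pose proof (inv_sq_potential_step (m - Z.of_nat (S N))%Z) as H2.
    replace (m - - Z.of_nat (S N))%Z with (m + Z.of_nat N + 1)%Z by lia.
    replace (m + Z.of_nat (S N) + 1)%Z with (m + Z.of_nat N + 1 + 1)%Z by lia.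
    replace (m - Z.of_nat (S N) + 1)%Z with (m - Z.of_nat N)%Z in H2 by lia.
    lra.
Qed.

Lemma sym_rsum_inv_bracket_le N : sym_rsum N (fun n => / (bracket n ^ 2)) <= 6.
Proof.
  eapply Rle_trans; [|apply (sym_rsum_inv_bracket_sub_le N 0)].
  apply sym_rsum_le. intros n. rewrite Z.sub_0_l, bracket_opp. apply Rle_refl.
Qed.

Lemma sym_psum_tail_le f c N k :
  0 <= c -> (1 <= N)%nat -> (forall n, Cmod (f n) <= c / (bracket n ^ 2)) ->
  Cmod (Cminus (sym_psum (N + k) f) (sym_psum N f)) <= 2 * c * (/ INR N - / INR (N + k)).
Proof.
  intros Hc HN Hf. induction k as [|k IH].
  - rewrite Nat.add_0_r. replace (Cminus _ _) with (RtoC 0) by ring. rewrite Cmod_0. lra.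
  - replace (N + S k)%nat with (S (N + k)) by lia. rewrite sym_psum_S.
    set (M := (N + k)%nat) in *.
    replace (Cminus (Cplus (Cplus (sym_psum M f) (f (- Z.of_nat (S M))%Z)) (f (Z.of_nat (S M)))) (sym_psum N f))
      with (Cplus (Cminus (sym_psum M f) (sym_psum N f)) (Cplus (f (- Z.of_nat (S M))%Z) (f (Z.of_nat (S M)))))
      by ring.
    eapply Rle_trans; [apply Cmod_triangle|].
    eapply Rle_trans; [apply Rplus_le_compat_l, Cmod_triangle|].
    pose proof (Hf (- Z.of_nat (S M))%Z) as H1. pose proof (Hf (Z.of_nat (S M))) as H2.
    assert (Hbr : bracket (Z.of_nat (S M)) = INR (S M))
      by (rewrite bracket_neq0, INR_IZR_INZ by lia; f_equal; lia).
    rewrite bracket_opp, Hbr in H1. rewrite Hbr in H2.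
    assert (HM : 1 <= INR M) by (apply (le_INR 1); unfold M; lia).
    rewrite S_INR in *.
    assert (/ (INR M + 1) ^ 2 <= / INR M - / (INR M + 1)).
    { replace (/ INR M - / (INR M + 1)) with (/ (INR M * (INR M + 1))) by (field; lra).
      apply Rinv_le_contravar; nra. }
    assert (c * / (INR M + 1) ^ 2 <= c * (/ INR M - / (INR M + 1))) by (apply Rmult_le_compat_l; lra).
    unfold Rdiv in H1, H2. lra.
Qed.

Lemma exp_le x y : x <= y -> exp x <= exp y.
Proof. intros [H|<-]; [left; now apply exp_increasing | apply Rle_refl]. Qed.

Definition decay_weight (chi : R) (m : Z) : R := exp (- chi * IZR (Z.abs m)) / (bracket m) ^ 2.

Lemma decay_weight_pos chi m : 0 < decay_weight chi m.
Proof.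
  apply Rdiv_lt_0_compat; [apply exp_pos|]. pose proof (bracket_ge_1 m). apply pow_lt. lra.
Qed.

Lemma decay_weight_le chi m : 0 <= chi -> decay_weight chi m <= / (bracket m) ^ 2.
Proof.
  intros Hchi. pose proof (bracket_ge_1 m).
  unfold decay_weight, Rdiv. rewrite <- (Rmult_1_l (/ _)) at 2.
  apply Rmult_le_compat_r; [left; apply Rinv_0_lt_compat, pow_lt; lra|].
  rewrite <- exp_0. apply exp_le.
  assert (0 <= IZR (Z.abs m)) by (apply IZR_le; lia). nra.
Qed.

Lemma decay_weight_0 chi : decay_weight chi 0 = 1.
Proof. unfold decay_weight, bracket. simpl. rewrite Rmult_0_r, exp_0. field. Qed.

(* [<m>^2 <= 2 <n>^2 + 2 <m - n>^2] and [e^{-chi |.|}] is submultiplicative. *)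
Lemma decay_weight_mul_le chi m n :
  0 <= chi ->
  decay_weight chi n * decay_weight chi (m - n)
  <= decay_weight chi m * (2 * / (bracket n ^ 2) + 2 * / (bracket (m - n) ^ 2)).
Proof.
  intros Hchi. unfold decay_weight.
  pose proof (bracket_ge_1 n) as Hx. pose proof (bracket_ge_1 (m - n)) as Hy. pose proof (bracket_ge_1 m) as Hz.
  pose proof (bracket_triangle m n) as Ht.
  set (x := bracket n) in *. set (y := bracket (m - n)) in *. set (z := bracket m) in *.
  set (e1 := exp (- chi * IZR (Z.abs n))). set (e2 := exp (- chi * IZR (Z.abs (m - n)))).
  set (e3 := exp (- chi * IZR (Z.abs m))).
  assert (He : e1 * e2 <= e3).
  { unfold e1, e2, e3. rewrite <- exp_plus. apply exp_le.
    assert (IZR (Z.abs m) <= IZR (Z.abs n) + IZR (Z.abs (m - n))) by (rewrite <- plus_IZR; apply IZR_le; lia).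
    nra. }
  assert (0 < e1) by apply exp_pos. assert (0 < e2) by apply exp_pos.
  replace (e1 / x ^ 2 * (e2 / y ^ 2)) with ((e1 * e2) * / (x ^ 2 * y ^ 2)) by (field; lra).
  replace (e3 / z ^ 2 * (2 * / x ^ 2 + 2 * / y ^ 2))
    with ((e3 * ((2 * y ^ 2 + 2 * x ^ 2) / z ^ 2)) * / (x ^ 2 * y ^ 2)) by (field; lra).
  apply Rmult_le_compat_r; [left; apply Rinv_0_lt_compat, Rmult_lt_0_compat; apply pow_lt; lra|].
  apply Rle_trans with e3; [exact He|].
  rewrite <- (Rmult_1_r e3) at 1. apply Rmult_le_compat_l; [nra|].
  apply Rle_div_r; [apply pow_lt; lra|].
  assert (z * z <= (x + y) * (x + y)) by (apply Rmult_le_compat; lra).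
  pose proof (pow2_ge_0 (x - y)). simpl. nra.
Qed.

Lemma Cmod_sym_psum_conv_le chi alpha beta (A H : Z -> C) N m :
  0 <= chi -> 0 <= alpha -> 0 <= beta ->
  (forall n, Cmod (A n) <= alpha * decay_weight chi n) ->
  (forall j, Cmod (H j) <= beta * decay_weight chi j) ->
  Cmod (sym_psum N (fun n => Cmult (A n) (H (m - n)%Z))) <= 24 * alpha * beta * decay_weight chi m.
Proof.
  intros Hchi Ha Hb HA HH.
  eapply Rle_trans; [apply Cmod_sym_psum_le|].
  eapply Rle_trans.
  { apply sym_rsum_le with
      (g := fun n => alpha * beta * (decay_weight chi m * (2 * / (bracket n ^ 2) + 2 * / (bracket (m - n) ^ 2)))).
    intros n. rewrite Cmod_mult.
    apply Rle_trans with (alpha * decay_weight chi n * (beta * decay_weight chi (m - n))).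
    - apply Rmult_le_compat; auto using Cmod_ge_0.
    - rewrite Rmult_assoc, (Rmult_comm (decay_weight chi n)), Rmult_assoc, <- (Rmult_assoc alpha).
      apply Rmult_le_compat_l; [nra|]. rewrite Rmult_comm. now apply decay_weight_mul_le. }
  rewrite sym_rsum_scal, sym_rsum_scal, sym_rsum_plus, !sym_rsum_scal.
  pose proof (sym_rsum_inv_bracket_le N). pose proof (sym_rsum_inv_bracket_sub_le N m).
  pose proof (decay_weight_pos chi m).
  replace (24 * alpha * beta * decay_weight chi m) with (alpha * beta * (decay_weight chi m * 24)) by ring.
  apply Rmult_le_compat_l; [nra|]. apply Rmult_le_compat_l; lra.
Qed.

(** * Functions given by a decaying Fourier series *)

Lemma le_of_le_plus_div_INR x y c : 0 <= c -> (forall N, (1 <= N)%nat -> x <= y + c / INR N) -> x <= y.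
Proof.
  intros Hc H. destruct (Rle_or_lt x y) as [Hxy|Hxy]; [exact Hxy|]. exfalso.
  destruct (archimed_cor1 ((x - y) / (c + 1))) as [N [HN HN0]]; [apply Rdiv_lt_0_compat; lra|].
  specialize (H N ltac:(lia)).
  assert (HNpos : 0 < INR N) by (apply lt_0_INR; lia).
  assert (c / INR N <= (c + 1) / INR N) by (apply Rmult_le_compat_r; [left; apply Rinv_0_lt_compat|]; lra).
  assert ((c + 1) / INR N < x - y); [|lra].
  unfold Rdiv. rewrite Rmult_comm. apply (Rmult_lt_reg_r (/ (c + 1))); [apply Rinv_0_lt_compat; lra|].
  rewrite Rmult_assoc, Rinv_r, Rmult_1_r by lra. exact HN.
Qed.

Lemma continuous_of_uniform_approx_R (f : R -> R) x :
  (forall eps, 0 < eps -> exists h : R -> R, continuous h x /\ forall t, Rabs (f t - h t) <= eps) ->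
  continuous f x.
Proof.
  intros H. apply filterlim_locally. intros eps. pose proof (cond_pos eps).
  destruct (H (eps / 3)) as [h [Hh Hb]]; [lra|].
  apply (proj1 (filterlim_locally h (h x))) with (eps := mkposreal (eps / 3) ltac:(lra)) in Hh.
  revert Hh. apply filter_imp. intros y Hy.
  change (Rabs (f y - f x) < eps). change (Rabs (h y - h x) < eps / 3) in Hy.
  pose proof (Hb x). pose proof (Hb y).
  replace (f y - f x) with ((f y - h y) + (h y - h x) + (h x - f x)) by ring.
  eapply Rle_lt_trans; [apply Rabs_triang|].
  eapply Rle_lt_trans; [apply Rplus_le_compat_r, Rabs_triang|].
  rewrite (Rabs_minus_sym (h x)). lra.
Qed.

Lemma continuous_of_uniform_approx (f : R -> C) x :
  (forall eps, 0 < eps -> exists h : R -> C, continuous h x /\ forall t, Cmod (Cminus (f t) (h t)) <= eps) ->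
  continuous f x.
Proof.
  intros H. apply continuous_C_Re_Im; apply continuous_of_uniform_approx_R; intros eps Heps;
    destruct (H eps Heps) as [h [Hh Hb]].
  - exists (fun t => Re (h t)). split; [now apply continuous_Re|].
    intros t. eapply Rle_trans; [|apply (Hb t)]. apply (re_le_Cmod (Cminus (f t) (h t))).
  - exists (fun t => Im (h t)). split; [now apply continuous_Im|].
    intros t. eapply Rle_trans; [|apply (Hb t)].
    eapply Rle_trans; [|apply (Rmax_Cmod (Cminus (f t) (h t)))]. apply Rmax_r.
Qed.

Definition fourier_psum (omega : R) (A : Z -> C) (N : nat) (t : R) : C :=
  sym_psum N (fun n => Cmult (A n) (cexpi (IZR n * omega * t))).

Lemma fourier_psum_S omega A N t :
  fourier_psum omega A (S N) t
  = Cplus (Cplus (fourier_psum omega A N t) (Cmult (A (- Z.of_nat (S N))%Z) (cexpi (IZR (- Z.of_nat (S N)) * omega * t))))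
          (Cmult (A (Z.of_nat (S N))) (cexpi (IZR (Z.of_nat (S N)) * omega * t))).
Proof. apply sym_psum_S. Qed.

Lemma continuous_fourier_psum omega A N : continuous_everywhere (fourier_psum omega A N).
Proof.
  intros x.
  assert (Hterm : forall n, continuous (fun t => Cmult (A n) (cexpi (IZR n * omega * t))) x)
    by (intros n; apply continuous_Cmult; [apply continuous_Cconst | apply continuous_cexpi_mul]).
  induction N as [|N IH].
  - apply continuous_ext with (f := fun t => Cplus (Cmult (A 0%Z) (cexpi (IZR 0 * omega * t))) (RtoC 0));
      [reflexivity|].
    apply continuous_Cplus; [apply Hterm | apply continuous_Cconst].
  - eapply continuous_ext; [intros t; symmetry; apply fourier_psum_S|].
    apply continuous_Cplus; [apply continuous_Cplus; [exact IH | apply Hterm] | apply Hterm].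
Qed.

Lemma fourier_psum_periodic omega A N : 0 < omega -> periodic (2 * PI / omega) (fourier_psum omega A N).
Proof.
  intros Ho x. unfold fourier_psum, sym_psum. f_equal. apply map_ext. intros j. f_equal.
  set (n := (Z.of_nat j - Z.of_nat N)%Z).
  replace (IZR n * omega * (x + 2 * PI / omega)) with (IZR n * omega * x + IZR n * (2 * PI)) by (field; lra).
  apply cexpi_plus_IZR_2PI.
Qed.

Lemma fcoef_fourier_psum_mul omega A N h m :
  continuous_everywhere h ->
  fcoef omega (fun t => Cmult (fourier_psum omega A N t) (h t)) m
  = sym_psum N (fun n => Cmult (A n) (fcoef omega h (m - n))).
Proof.
  intros Hh.
  set (F := fun n t => Cmult (Cmult (A n) (cexpi (IZR n * omega * t))) (h t)).
  assert (HF : forall n, continuous_everywhere (F n)).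
  { intros n x. apply continuous_Cmult; [|apply Hh].
    apply continuous_Cmult; [apply continuous_Cconst | apply continuous_cexpi_mul]. }
  assert (HFm : forall n, fcoef omega (F n) m = Cmult (A n) (fcoef omega h (m - n))).
  { intros n. unfold F.
    rewrite (fcoef_ext _ _ (fun t => Cmult (A n) (Cmult (cexpi (IZR n * omega * t)) (h t)))) by (intros; ring).
    rewrite fcoef_Cmult_l, fcoef_cexpi_mul; [reflexivity|].
    intros x. apply continuous_Cmult; [apply continuous_cexpi_mul | apply Hh]. }
  induction N as [|N IH].
  - rewrite sym_psum_0, (fcoef_ext _ _ (F 0%Z)), HFm; [ring|].
    intros t. unfold F, fourier_psum. rewrite sym_psum_0. ring.
  - assert (HS : continuous_everywhere (fun t => Cmult (fourier_psum omega A N t) (h t)))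
      by (intros x; apply continuous_Cmult; [apply continuous_fourier_psum | apply Hh]).
    rewrite sym_psum_S, <- IH, <- !HFm.
    rewrite (fcoef_ext _ _ (fun t => Cplus (Cplus (Cmult (fourier_psum omega A N t) (h t))
                                                  (F (- Z.of_nat (S N))%Z t)) (F (Z.of_nat (S N)) t)))
      by (intros t; unfold F; rewrite fourier_psum_S; ring).
    rewrite !fcoef_Cplus; auto.
    intros x. apply continuous_Cplus; [apply HS | apply HF].
Qed.

Section FourierSeries.
Variables (omega chi alpha : R) (A : Z -> C) (a : R -> C).
Hypotheses (Homega : 0 < omega) (Hchi : 0 < chi) (Halpha : 0 <= alpha)
  (Hseries : has_fourier_series omega A a) (HA : forall n, Cmod (A n) <= alpha * decay_weight chi n).

Lemma Cmod_fourier_term_le t n : Cmod (Cmult (A n) (cexpi (IZR n * omega * t))) <= alpha / (bracket n ^ 2).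
Proof.
  rewrite Cmod_mult, Cmod_cexpi, Rmult_1_r. eapply Rle_trans; [apply HA|].
  apply Rmult_le_compat_l; [exact Halpha|]. apply decay_weight_le. lra.
Qed.

(* The tail bound [sym_psum_tail_le] makes the convergence uniform in [t]. *)
Lemma fourier_psum_approx t N : (1 <= N)%nat -> Cmod (Cminus (a t) (fourier_psum omega A N t)) <= 2 * alpha / INR N.
Proof.
  intros HN. assert (HNpos : 0 < INR N) by (apply lt_0_INR; lia).
  apply (le_of_le_plus_div_INR _ _ 1); [lra|]. intros K HK.
  assert (HK' : 0 < / INR K) by (apply Rinv_0_lt_compat, lt_0_INR; lia).
  pose proof (proj1 (filterlim_locally (F := eventually) _ _) (Hseries t)) as Hlim.
  destruct (Hlim (mkposreal (/ INR K / norm_factor (V:=C_R_NormedModule))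
                   ltac:(apply Rdiv_lt_0_compat; [exact HK' | apply norm_factor_gt_0]))) as [M0 HM0].
  specialize (HM0 (N + M0)%nat ltac:(lia)).
  apply (norm_compat2 (V:=C_R_NormedModule)) in HM0. simpl in HM0. rewrite <- Cmod_norm in HM0.
  replace (norm_factor * (/ INR K / norm_factor)) with (/ INR K) in HM0
    by (field; split; [apply not_0_INR; lia | apply Rgt_not_eq, (norm_factor_gt_0 (V:=C_R_NormedModule))]).
  change (Cmod (Cminus (fourier_psum omega A (N + M0) t) (a t)) < / INR K) in HM0.
  pose proof (sym_psum_tail_le (fun n => Cmult (A n) (cexpi (IZR n * omega * t))) alpha N M0 Halpha HN
                (Cmod_fourier_term_le t)) as Htail.
  fold (fourier_psum omega A (N + M0) t) (fourier_psum omega A N t) in Htail.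
  replace (Cminus (a t) (fourier_psum omega A N t))
    with (Cplus (Copp (Cminus (fourier_psum omega A (N + M0) t) (a t)))
                (Cminus (fourier_psum omega A (N + M0) t) (fourier_psum omega A N t)))
    by ring.
  eapply Rle_trans; [apply Cmod_triangle|]. rewrite Cmod_opp.
  assert (0 <= 2 * alpha * / INR (N + M0))
    by (apply Rmult_le_pos; [lra | left; apply Rinv_0_lt_compat, lt_0_INR; lia]).
  unfold Rdiv in *. lra.
Qed.

Lemma fourier_series_continuous : continuous_everywhere a.
Proof.
  intros x. apply continuous_of_uniform_approx. intros eps Heps.
  destruct (archimed_cor1 (eps / (2 * alpha + 1))) as [N [HN HN0]]; [apply Rdiv_lt_0_compat; lra|].
  exists (fourier_psum omega A N). split; [apply continuous_fourier_psum|].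
  intros t. eapply Rle_trans; [apply fourier_psum_approx; lia|].
  assert (HNpos : 0 < INR N) by (apply lt_0_INR; lia).
  assert (Hlt : 2 * alpha + 1 < eps * INR N).
  { apply (Rmult_lt_compat_r (INR N * (2 * alpha + 1))) in HN; [|nra].
    replace (/ INR N * (INR N * (2 * alpha + 1))) with (2 * alpha + 1) in HN by (field; lra).
    replace (eps / (2 * alpha + 1) * (INR N * (2 * alpha + 1))) with (eps * INR N) in HN by (field; lra).
    exact HN. }
  apply Rle_div_l; [exact HNpos | lra].
Qed.

Lemma fourier_series_periodic : periodic (2 * PI / omega) a.
Proof.
  intros x. set (T := 2 * PI / omega).
  assert (H : Cmod (Cminus (a (x + T)) (a x)) = 0).
  { apply Rle_antisym; [|apply Cmod_ge_0].
    apply (le_of_le_plus_div_INR _ _ (4 * alpha)); [lra|]. intros N HN.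
    replace (Cminus (a (x + T)) (a x))
      with (Cminus (Cminus (a (x + T)) (fourier_psum omega A N (x + T))) (Cminus (a x) (fourier_psum omega A N x)))
      by (unfold T; rewrite fourier_psum_periodic by exact Homega; ring).
    eapply Rle_trans; [unfold Cminus at 1; apply Cmod_triangle|]. rewrite Cmod_opp.
    pose proof (fourier_psum_approx (x + T) N HN). pose proof (fourier_psum_approx x N HN).
    unfold Rdiv in *. lra. }
  apply Cmod_eq_0 in H.
  replace (a (x + T)) with (Cplus (Cminus (a (x + T)) (a x)) (a x)) by ring.
  rewrite H. ring.
Qed.

Lemma Cmod_fourier_psum_le N t : Cmod (fourier_psum omega A N t) <= 6 * alpha.
Proof.
  eapply Rle_trans; [apply Cmod_sym_psum_le|].
  eapply Rle_trans; [apply sym_rsum_le; intros n; apply (Cmod_fourier_term_le t n)|].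
  unfold Rdiv. rewrite sym_rsum_scal, (Rmult_comm 6).
  apply Rmult_le_compat_l; [exact Halpha | apply sym_rsum_inv_bracket_le].
Qed.

Lemma Cmod_fourier_series_le t : Cmod (a t) <= 6 * alpha.
Proof.
  apply (le_of_le_plus_div_INR _ _ (2 * alpha)); [lra|]. intros N HN.
  replace (a t) with (Cplus (Cminus (a t) (fourier_psum omega A N t)) (fourier_psum omega A N t)) by ring.
  eapply Rle_trans; [apply Cmod_triangle|].
  pose proof (fourier_psum_approx t N HN). pose proof (Cmod_fourier_psum_le N t). lra.
Qed.

End FourierSeries.

(** * Stability of the weighted bounds under the steps of [Renorm] *)

Record fourier_bounded (omega chi B beta : R) (h : R -> C) : Prop := {
  fb_continuous : continuous_everywhere h;
  fb_periodic : periodic (2 * PI / omega) h;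
  fb_sup : forall t, Cmod (h t) <= B;
  fb_fcoef : forall m, Cmod (fcoef omega h m) <= beta * decay_weight chi m }.

Lemma fourier_bounded_nonneg omega chi B beta h :
  fourier_bounded omega chi B beta h -> 0 <= B /\ 0 <= beta.
Proof.
  intros [_ _ Hsup Hcoef]. split.
  - eapply Rle_trans; [apply Cmod_ge_0 | apply (Hsup 0)].
  - pose proof (Hcoef 0%Z) as H. rewrite decay_weight_0, Rmult_1_r in H.
    eapply Rle_trans; [apply Cmod_ge_0 | exact H].
Qed.

Lemma fourier_bounded_ext omega chi B beta h1 h2 :
  (forall t, h1 t = h2 t) -> fourier_bounded omega chi B beta h1 -> fourier_bounded omega chi B beta h2.
Proof.
  intros E [Hc Hp Hs Hf]. split.
  - intros x. eapply continuous_ext; [exact E | apply Hc].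
  - intros x. rewrite <- !E. apply Hp.
  - intros t. rewrite <- E. apply Hs.
  - intros m. rewrite <- (fcoef_ext _ _ _ _ E). apply Hf.
Qed.

Lemma fourier_bounded_weaken omega chi B beta B' beta' h :
  fourier_bounded omega chi B beta h -> B <= B' -> beta <= beta' -> fourier_bounded omega chi B' beta' h.
Proof.
  intros [Hc Hp Hs Hf] HB Hbeta. split; [exact Hc | exact Hp | |].
  - intros t. specialize (Hs t). lra.
  - intros m. eapply Rle_trans; [apply Hf|].
    apply Rmult_le_compat_r; [left; apply decay_weight_pos | exact Hbeta].
Qed.

Lemma fourier_bounded_one omega chi : 0 < omega -> fourier_bounded omega chi 1 1 (fun _ => RtoC 1).
Proof.
  intros Ho. split.
  - intros x. apply continuous_Cconst.
  - intros x. reflexivity.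
  - intros t. rewrite Cmod_1. lra.
  - intros j. destruct (Z.eq_dec j 0) as [->|Hj].
    + rewrite fcoef_const_0, Cmod_1, decay_weight_0 by exact Ho. lra.
    + rewrite fcoef_const_neq0, Cmod_0 by assumption. pose proof (decay_weight_pos chi j). lra.
Qed.

Section SeriesProduct.
Variables (omega chi alpha B beta : R) (A : Z -> C) (a h : R -> C).
Hypotheses (Homega : 0 < omega) (Hchi : 0 < chi) (Halpha : 0 <= alpha)
  (Hseries : has_fourier_series omega A a) (HA : forall n, Cmod (A n) <= alpha * decay_weight chi n)
  (Hh : fourier_bounded omega chi B beta h).

Lemma fcoef_mul_sub_conv_le N m :
  (1 <= N)%nat ->
  Cmod (Cminus (fcoef omega (fun t => Cmult (a t) (h t)) m)
               (sym_psum N (fun n => Cmult (A n) (fcoef omega h (m - n)))))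
  <= 2 * alpha / INR N * B.
Proof.
  intros HN. destruct Hh as [Hc _ Hs _].
  pose proof (fourier_series_continuous omega chi alpha A a Hchi Halpha Hseries HA) as Ha.
  assert (Hah : continuous_everywhere (fun t => Cmult (a t) (h t)))
    by (intros x; apply continuous_Cmult; [apply Ha | apply Hc]).
  assert (HSh : continuous_everywhere (fun t => Cmult (fourier_psum omega A N t) (h t)))
    by (intros x; apply continuous_Cmult; [apply continuous_fourier_psum | apply Hc]).
  rewrite <- fcoef_fourier_psum_mul, <- fcoef_Cminus by assumption.
  apply Cmod_fcoef_le; [exact Homega | |].
  - intros x. apply continuous_Cminus; [apply Hah | apply HSh].
  - intros t _.
    replace (Cminus (Cmult (a t) (h t)) (Cmult (fourier_psum omega A N t) (h t)))
      with (Cmult (Cminus (a t) (fourier_psum omega A N t)) (h t)) by ring.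
    rewrite Cmod_mult. apply Rmult_le_compat; auto using Cmod_ge_0.
    now apply (fourier_psum_approx omega chi alpha A a Hchi Halpha Hseries HA).
Qed.

(* The coefficients of [a h] are the limits of the convolutions
   [sym_psum N (fun n => A n * fcoef omega h (m - n))]. *)
Lemma fourier_bounded_series_mul :
  fourier_bounded omega chi (6 * alpha * B) (24 * alpha * beta) (fun t => Cmult (a t) (h t)).
Proof.
  destruct (fourier_bounded_nonneg _ _ _ _ _ Hh) as [HB Hbeta].
  pose proof Hh as [Hc Hp Hs Hf].
  split.
  - intros x. apply continuous_Cmult; [now apply (fourier_series_continuous omega chi alpha A) | apply Hc].
  - intros x. now rewrite (fourier_series_periodic omega chi alpha A a Homega Hchi Halpha Hseries HA x), Hp.
  - intros t. rewrite Cmod_mult. apply Rmult_le_compat; auto using Cmod_ge_0.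
    now apply (Cmod_fourier_series_le omega chi alpha A).
  - intros m. apply (le_of_le_plus_div_INR _ _ (2 * alpha * B)); [nra|]. intros N HN.
    pose proof (fcoef_mul_sub_conv_le N m HN) as Happrox.
    pose proof (Cmod_sym_psum_conv_le chi alpha beta A (fcoef omega h) N m ltac:(lra) Halpha Hbeta HA Hf) as Hconv.
    set (X := fcoef omega (fun t => Cmult (a t) (h t)) m) in *.
    set (Y := sym_psum N (fun n => Cmult (A n) (fcoef omega h (m - n)))) in *.
    replace X with (Cplus (Cminus X Y) Y) by ring.
    eapply Rle_trans; [apply Cmod_triangle|].
    unfold Rdiv in *. lra.
Qed.

End SeriesProduct.

Section CenteredPrimitive.
Variables (omega chi B beta : R) (g : R -> C).
Hypotheses (Homega : 0 < omega) (Hg : fourier_bounded omega chi B beta g).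

Let T := 2 * PI / omega.
Let gc := fun s => Cminus (g s) (Mean g).

Lemma Mean_fourier_bounded : Mean g = fcoef omega g 0.
Proof. destruct Hg as [Hc Hp Hs _]. exact (Mean_fcoef_0 omega g B Homega Hc Hp Hs). Qed.

Lemma continuous_centered : continuous_everywhere gc.
Proof. intros x. apply continuous_Cminus; [apply (fb_continuous _ _ _ _ _ Hg) | apply continuous_Cconst]. Qed.

Lemma CInt_centered_period : CInt gc 0 T = RtoC 0.
Proof.
  pose proof PI_RGT_0. unfold gc. rewrite (RInt_minus (V:=C_R_CompleteNormedModule))
    by (apply ex_RInt_continuous_everywhere;
        first [apply (fb_continuous _ _ _ _ _ Hg) | intro; apply continuous_Cconst]).
  change minus with Cminus.
  rewrite Mean_fourier_bounded, fcoef_0, CInt_const, Cmult_assoc, <- RtoC_mult.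
  replace ((T - 0) * (omega / (2 * PI))) with 1 by (unfold T; field; lra).
  fold T. set (I := CInt g 0 T). change (Cminus I (Cmult (RtoC 1) I) = RtoC 0). ring.
Qed.

Lemma Cmod_fcoef_centered_primitive_neq0 j :
  j <> 0%Z -> Cmod (fcoef omega (fun t => CInt gc 0 t) j) <= beta / omega * decay_weight chi j.
Proof.
  intros Hj. pose proof continuous_centered as Hgc.
  pose proof (Cmod_fcoef_primitive omega gc j Homega Hgc CInt_centered_period Hj) as Hibp.
  pose proof (fb_continuous _ _ _ _ _ Hg) as Hc.
  assert (Hm : continuous_everywhere (fun _ => Mean g)) by (intro; apply continuous_Cconst).
  unfold gc in Hibp. rewrite fcoef_Cminus, fcoef_const_neq0 in Hibp by assumption.
  replace (Cminus (fcoef omega g j) (RtoC 0)) with (fcoef omega g j) in Hibp by ring.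
  fold gc in Hibp. set (c := Cmod (fcoef omega (fun t => CInt gc 0 t) j)) in *.
  assert (Hj1 : 1 <= Rabs (IZR j)) by (rewrite <- abs_IZR; apply IZR_le; lia).
  apply (Rmult_le_reg_r omega); [exact Homega|].
  replace (beta / omega * decay_weight chi j * omega) with (beta * decay_weight chi j) by (field; lra).
  rewrite <- (fb_fcoef _ _ _ _ _ Hg), <- Hibp.
  apply Rle_trans with (c * omega * Rabs (IZR j)); [|right; ring].
  rewrite <- (Rmult_1_r (c * omega)) at 1. apply Rmult_le_compat_l; [|exact Hj1].
  apply Rmult_le_pos; [apply Cmod_ge_0 | lra].
Qed.

Lemma fourier_bounded_centered_primitive :
  fourier_bounded omega chi (2 * T * B) (beta / omega + 2 * T * B) (fun t => CInt gc 0 t).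
Proof.
  destruct (fourier_bounded_nonneg _ _ _ _ _ Hg) as [HB Hbeta].
  pose proof Hg as [Hc Hp Hs Hf].
  pose proof continuous_centered as Hgc.
  assert (HT : 0 < T) by (pose proof PI_RGT_0; apply Rdiv_lt_0_compat; lra).
  assert (Hex : forall a b, ex_RInt (V:=C_R_CompleteNormedModule) gc a b)
    by (intros; now apply ex_RInt_continuous_everywhere).
  assert (Hpc : periodic T gc) by (intros x; unfold gc; now rewrite Hp).
  assert (Hsup : forall t, Cmod (CInt gc 0 t) <= 2 * T * B).
  { intros t. replace (2 * T * B) with (T * (2 * B)) by ring. rewrite Cmod_norm.
    apply (norm_RInt_primitive_le (V:=C_R_CompleteNormedModule) gc T HT Hex Hpc CInt_centered_period).
    intros s. rewrite <- Cmod_norm. unfold gc, Cminus.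
    eapply Rle_trans; [apply Cmod_triangle|]. rewrite Cmod_opp, Mean_fourier_bounded.
    pose proof (Hs s). pose proof (Cmod_fcoef_le omega g 0 B Homega Hc (fun t _ => Hs t)). lra. }
  split.
  - now apply continuous_primitive.
  - exact (RInt_primitive_periodic (V:=C_R_CompleteNormedModule) gc T Hex Hpc CInt_centered_period).
  - exact Hsup.
  - intros j. pose proof (decay_weight_pos chi j).
    assert (0 <= beta / omega * decay_weight chi j) by (apply Rmult_le_pos; [apply Rdiv_le_0_compat|]; lra).
    assert (0 <= 2 * T * B * decay_weight chi j) by (apply Rmult_le_pos; nra).
    rewrite Rmult_plus_distr_r.
    destruct (Z.eq_dec j 0) as [->|Hj].
    + rewrite decay_weight_0, Rmult_1_r in *.
      pose proof (Cmod_fcoef_le omega (fun t => CInt gc 0 t) 0 _ Homega (continuous_primitive _ Hgc)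
                    (fun t _ => Hsup t)).
      lra.
    + pose proof (Cmod_fcoef_centered_primitive_neq0 j Hj). lra.
Qed.

End CenteredPrimitive.

Lemma fold_right_Rmult_pos (alpha : nat -> R) s n :
  (forall l, (s <= l < s + n)%nat -> 0 < alpha l) -> 0 < fold_right Rmult 1 (map alpha (seq s n)).
Proof.
  revert s. induction n as [|n IH]; intros s H; simpl; [lra|].
  apply Rmult_lt_0_compat; [apply H; lia | apply IH; intros; apply H; lia].
Qed.

Lemma Renorm_fourier_bounded omega chi n :
  0 < omega -> 0 < chi ->
  exists B beta, 0 <= B /\ 0 < beta /\
  forall s (alpha : nat -> R) (A : nat -> Z -> C) (a : nat -> R -> C),
    (forall l, (s <= l <= s + n)%nat -> 0 < alpha l) ->
    (forall l, (s <= l <= s + n)%nat -> has_fourier_series omega (A l) (a l)) ->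
    (forall l m, (s <= l <= s + n)%nat -> Cmod (A l m) <= alpha l * decay_weight chi m) ->
    fourier_bounded omega chi (B * fold_right Rmult 1 (map alpha (seq s (S n))))
      (beta * fold_right Rmult 1 (map alpha (seq s (S n)))) (Renorm (map a (seq s (S n)))).
Proof.
  intros Ho Hchi. induction n as [|n IH].
  - exists 6, 24. split; [lra | split; [lra |]].
    intros s alpha A a Hal HF HA.
    assert (Hs : (s <= s <= s + 0)%nat) by lia.
    pose proof (Hal s Hs) as Has.
    pose proof (fourier_bounded_series_mul omega chi (alpha s) _ _ (A s) (a s) _ Ho Hchi ltac:(lra)
                  (HF s Hs) (fun m => HA s m Hs) (fourier_bounded_one omega chi Ho)) as Hprod.
    apply (fourier_bounded_ext _ _ _ _ _ (a s)) in Hprod; [|intros t; apply Cmult_1_r].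
    apply (fourier_bounded_weaken _ _ _ _ _ _ _ Hprod); simpl; lra.
  - destruct IH as (B & beta & HB & Hbeta & IH).
    pose proof PI_RGT_0. set (T := 2 * PI / omega).
    assert (HT : 0 < T) by (apply Rdiv_lt_0_compat; lra).
    exists (12 * T * B), (24 * (beta / omega + 2 * T * B)).
    split; [nra | split; [assert (0 < beta / omega) by (apply Rdiv_lt_0_compat; lra); nra |]].
    intros s alpha A a Hal HF HA.
    set (g := Renorm (map a (seq (S s) (S n)))).
    set (P := fold_right Rmult 1 (map alpha (seq (S s) (S n)))).
    assert (Hg : fourier_bounded omega chi (B * P) (beta * P) g)
      by (apply (IH (S s) alpha A a); intros; [apply Hal | apply HF | apply HA]; lia).
    assert (HP : 0 < P) by (apply fold_right_Rmult_pos; intros; apply Hal; lia).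
    assert (Hs : (s <= s <= s + S n)%nat) by lia.
    pose proof (Hal s Hs) as Has.
    change (fold_right Rmult 1 (map alpha (seq s (S (S n))))) with (alpha s * P).
    change (Renorm (map a (seq s (S (S n)))))
      with (fun t => Cmult (a s t) (CInt (fun u => Cminus (g u) (Mean g)) 0 t)).
    pose proof (fourier_bounded_series_mul omega chi (alpha s) _ _ (A s) (a s) _ Ho Hchi ltac:(lra)
                  (HF s Hs) (fun m => HA s m Hs) (fourier_bounded_centered_primitive omega chi _ _ g Ho Hg))
      as Hprod.
    apply (fourier_bounded_weaken _ _ _ _ _ _ _ Hprod); fold T; right; field; lra.
Qed.

Theorem propositionB2 (k : nat) (omega chi : R) :
  (2 <= k)%nat -> 0 < omega -> 0 < chi ->
  exists beta : R, 0 < beta /\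
  forall (alpha : nat -> R) (A : nat -> Z -> C) (a : nat -> R -> C),
    (forall l, (1 <= l <= k)%nat -> 0 < alpha l) ->
    (forall l, (1 <= l <= k)%nat -> has_fourier_series omega (A l) (a l)) ->
    (forall l m, (1 <= l <= k)%nat ->
        Cmod (A l m) <= alpha l * exp (- chi * IZR (Z.abs m)) / (bracket m) ^ 2) ->
    forall m : Z,
      Cmod (fcoef omega (Renorm (map a (seq 1 k))) m)
        <= beta * fold_right Rmult 1 (map alpha (seq 1 k))
           * exp (- chi * IZR (Z.abs m)) / (bracket m) ^ 2.
Proof.
  intros Hk Ho Hchi. destruct k as [|n]; [lia|].
  destruct (Renorm_fourier_bounded omega chi n Ho Hchi) as (B & beta & _ & Hbeta & H).
  exists beta. split; [exact Hbeta|].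
  intros alpha A a Hal HF HA m.
  assert (Hfb : fourier_bounded omega chi (B * fold_right Rmult 1 (map alpha (seq 1 (S n))))
                  (beta * fold_right Rmult 1 (map alpha (seq 1 (S n)))) (Renorm (map a (seq 1 (S n))))).
  { apply (H 1%nat alpha A a); intros; [apply Hal | apply HF | unfold decay_weight, Rdiv; rewrite <- Rmult_assoc; apply HA]; lia. }
  eapply Rle_trans; [apply (fb_fcoef _ _ _ _ _ Hfb)|].
  right. unfold decay_weight, Rdiv. ring.
Qed.
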